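(* Let $(p,f)$ be an SCF-RT that is rationalizable within the class of Fechnerian RUM-CFs. Let $(x,y)\in C\setminus D$ and suppose there exists $z\in X$ with $(x,z),(y,z)\in D$. Then there is a number $\bar p(x,y)$ such that every Fechnerian RUM-CF rationalizing $(p,f)$ satisfies $G(y,x)(0)=\bar p(x,y)$. Moreover, if $p(x,z)\geq p(y,z)$, then $\bar p(x,y)=p(x,z)\,F(x,z)(\theta(y,z))$ if $p(y,z)>1/2$; $\bar p(x,y)=p(x,z)$ if $p(y,z)=1/2$; and $\bar p(x,y)=1-p(z,x)\,F(z,x)(\theta(z,y))$ if $p(y,z)<1/2$.
   Context: $X$ is a finite set of options; $C=\{(x,y): x,y\in X,\ x\neq y\}$; $D\subseteq C$ is a fixed non-empty set with $(x,y)\in D\Rightarrow (y,x)\in D$. An SCF $p$ assigns to each $(x,y)\in D$ a number $p(x,y)>0$ with $p(x,y)+p(y,x)=1$. An SCF-RT is a pair $(p,f)$ where $p$ is an SCF and $f$ assigns to each $(x,y)\in D$ a strictly positive density $f(x,y)$ on $\mathbb{R}^+$ with cdf $F(x,y)$. A RUM is a pair $(u,g)$ with $u:X\to\mathbb{R}$ and $g$ assigning to each $(x,y)\in C$ a density $g(x,y)$ on $\mathbb{R}$ (cdf $G(x,y)$) with $\int v\,g(x,y)(v)\,dv=u(x)-u(y)=:v(x,y)$, $g(x,y)(v)=g(y,x)(-v)$ for all $v$, and connected support. A RUM-CF is $(u,g,r)$ with $(u,g)$ a RUM and $r:\mathbb{R}^{++}\to\mathbb{R}^+$ continuous, strictly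 decreasing where $r(v)>0$, $\lim_{v\to0}r(v)=\infty$, $\lim_{v\to\infty}r(v)=0$; $r^{-1}(t)$ ($t>0$) is the inverse of $r$ restricted to $\{r>0\}$. It rationalizes $(p,f)$ if for all $(x,y)\in D$: $G(x,y)(0)=p(y,x)$ and $\frac{1-G(x,y)(r^{-1}(t))}{1-G(x,y)(0)}=F(x,y)(t)$ for all $t>0$. A RUM-CF is Fechnerian if there is a density $g$ on $\mathbb{R}$ with $g(\delta)=g(-\delta)>0$ for all $\delta\geq0$ such that $g(x,y)(v)=g(v-v(x,y))$ for all $(x,y)\in C$, $v\in\mathbb{R}$. For $(a,b)\in D$ with $p(a,b)>p(b,a)$, $\theta(a,b)>0$ is defined by $F(a,b)(\theta(a,b))=\frac{1}{2p(a,b)}$. *)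

From HB Require Import structures.
From mathcomp Require Import all_boot all_order all_algebra.
From mathcomp Require Import all_classical all_reals all_analysis.
Set Implicit Arguments. Unset Strict Implicit. Unset Printing Implicit Defensive.
Import Order.TTheory GRing.Theory Num.Theory.
Import numFieldNormedType.Exports.
Local Open Scope classical_set_scope.
Local Open Scope ring_scope.

Section Defs.
Variable R : realType.
Notation mu := (@lebesgue_measure R).

Definition densityR (g : R -> R) : Prop :=
  measurable_fun setT g /\ (forall v, 0 <= g v) /\
  (\int[mu]_v (g v)%:E = 1%:E)%E.

Definition cdfR (g : R -> R) (v : R) : R :=
  fine (\int[mu]_(w in [set w : R | (w <= v)%R]) (g w)%:E)%E.

Definition pos_densityRp (f : R -> R) : Prop :=
  measurable_fun [set t : R | 0 <= t] f /\ (forall t, 0 <= t -> 0 < f t) /\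
  (\int[mu]_(t in [set t : R | (0 <= t)%R]) (f t)%:E = 1%:E)%E.

Definition cdfRp (f : R -> R) (t : R) : R :=
  fine (\int[mu]_(s in [set s : R | (0 <= s <= t)%R]) (f s)%:E)%E.

Variable X : finType.

Definition is_SCF (D : rel X) (p : X -> X -> R) : Prop :=
  forall x y, D x y -> 0 < p x y /\ p x y + p y x = 1.

Definition is_SCF_RT (D : rel X) (p : X -> X -> R) (f : X -> X -> R -> R) : Prop :=
  is_SCF D p /\ forall x y, D x y -> pos_densityRp (f x y).

Definition is_RUM (u : X -> R) (g : X -> X -> R -> R) : Prop :=
  forall x y, x != y ->
    densityR (g x y) /\
    mu.-integrable setT (fun v => (v * g x y v)%:E) /\
    (\int[mu]_v (v * g x y v)%:E = (u x - u y)%:E)%E /\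
    (forall v, g x y v = g y x (- v)) /\
    connected (closure [set v | 0 < g x y v]).

Definition is_CF (r : R -> R) : Prop :=
  (forall v, 0 < v -> 0 <= r v) /\
  {within `]0, +oo[, continuous r} /\
  (forall a b, 0 < a -> a < b -> 0 < r a -> 0 < r b -> r b < r a) /\
  (r v @[v --> 0^'+] --> +oo) /\
  (r v @[v --> +oo] --> 0).

Definition rinv (r : R -> R) (t : R) : R :=
  xget 0 [set v | 0 < v /\ 0 < r v /\ r v = t].

Definition is_RUM_CF (u : X -> R) (g : X -> X -> R -> R) (r : R -> R) : Prop :=
  is_RUM u g /\ is_CF r.

Definition rationalizes (D : rel X) (p : X -> X -> R) (f : X -> X -> R -> R)
    (u : X -> R) (g : X -> X -> R -> R) (r : R -> R) : Prop :=
  forall x y, D x y ->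
    cdfR (g x y) 0 = p y x /\
    forall t, 0 < t ->
      (1 - cdfR (g x y) (rinv r t)) / (1 - cdfR (g x y) 0) = cdfRp (f x y) t.

Definition fechnerian (u : X -> R) (g : X -> X -> R -> R) : Prop :=
  exists g0 : R -> R, densityR g0 /\
    (forall d, 0 <= d -> g0 d = g0 (- d) /\ 0 < g0 d) /\
    forall x y, x != y -> forall v, g x y v = g0 (v - (u x - u y)).

Definition theta (p : X -> X -> R) (f : X -> X -> R -> R) (a b : X) : R :=
  xget 0 [set t | 0 < t /\ cdfRp (f a b) t = 1 / (2 * p a b)].

End Defs.

(* In a Fechnerian model every g(a,b) is the translate by u a - u b of one
   symmetric, everywhere positive density g0, so all the data are read off the
   strictly increasing cdf H of g0, which satisfies H (- s) = 1 - H s and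
   H 0 = 1/2.  Rationalization becomes H (u b - u a) = p(b,a) and
   p(a,b) F(a,b)(t) = 1 - H (r^-1(t) - (u a - u b)).
   The function r has no zero: if r v0 = 0, the intermediate value theorem and
   strict monotonicity keep every point where r > 0 below v0, whereas
   F(a,b)(t) -> 0 as t -> 0 forces r^-1(t) above v0.  Hence r^-1 (r v) = v, and
   when p(a,b) > 1/2 the equation defining theta(a,b) forces
   r^-1(theta(a,b)) = u a - u b.  Finally G(y,x)(0) = H (u x - u y), and
   u x - u y = (u x - u z) - (u y - u z) is recovered from the pairs (x,z) and
   (y,z), through theta(y,z), u y = u z, or theta(z,y) according to the sign of
   u y - u z, i.e. of p(y,z) - 1/2. *)

From HB Require Import structures.
From mathcomp Require Import all_boot all_order all_algebra.
From mathcomp Require Import all_classical all_reals all_analysis.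
From mathcomp Require Import measurable_realfun ring lra.
Set Implicit Arguments. Unset Strict Implicit. Unset Printing Implicit Defensive.
Import Order.TTheory GRing.Theory Num.Theory.
Import numFieldNormedType.Exports.
Local Open Scope classical_set_scope.
Local Open Scope ring_scope.

Section lebesgue_integral_facts.
Context {R : realType}.
Local Notation mu := (@lebesgue_measure R).

Lemma measurable_center (c : R) : measurable_fun setT (center c : R -> R).
Proof. by apply: measurable_funD => //; exact: measurable_cst. Qed.
#[local] Hint Extern 0 (measurable_fun _ (center _)) =>
  solve [apply: measurable_center] : core.

Lemma lebesgue_measure_center (c : R) (A : set R) : measurable A ->
  pushforward mu (center c : R -> measurableTypeR R) A = mu A.
Proof.
move=> mA; apply/esym.
apply: (lebesgue_measure_unique (mu := pushforward mu (center c : R -> measurableTypeR R))) => //.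
move=> _ [[a b]] _ <-.
change (mu `]a, b]%classic = mu (center c @^-1` `]a, b]%classic)).
rewrite (_ : center c @^-1` _ = `](a + c), (b + c)]%classic); last first.
  by apply/seteqP; split => w /=; rewrite !in_itv /= ltrBrDr lerBlDr.
rewrite !lebesgue_measure_itv /= !lte_fin ltrD2r.
by case: ifP => // _; rewrite -!EFinD opprD addrACA subrr addr0.
Qed.

Variable g : R -> R.
Hypothesis mg : measurable_fun setT g.

Let mEg (A : set R) : measurable_fun A (EFin \o g).
Proof. by apply/measurable_EFinP; exact: measurable_funS mg. Qed.

Lemma integral_itv_gt0 (a b : R) : (forall v, 0 < g v) -> a < b ->
  (0 < \int[mu]_(w in `]a, b]) (g w)%:E)%E.
Proof.
move=> g_gt0 ab; have Eg_nonneg v : (0 <= (g v)%:E)%E by rewrite lee_fin ltW.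
rewrite lt0e integral_ge0 ?andbT //; apply/eqP => int0.
have [|N [mN N0 sub]] := (ae_eq_integral_abs mu (measurable_itv `]a, b]) (@mEg `]a, b]%classic)).1.
  by rewrite -[RHS]int0; apply: eq_integral => w _; rewrite /= ger0_norm // ltW.
have : (mu `]a, b] <= mu N)%E.
  apply: le_measure; rewrite ?inE //.
  by move=> w abw; apply: sub => /= /(_ abw) [] /eqP; rewrite gt_eqF.
by rewrite N0 lebesgue_measure_itv /= lte_fin ab -EFinD lee_fin subr_le0 leNgt ab.
Qed.

Hypothesis g_ge0 : forall v, 0 <= g v.

Let Eg_ge0 (A : set R) : forall v, A v -> (0 <= (g v)%:E)%E.
Proof. by move=> v _; rewrite lee_fin. Qed.

Lemma ge0_integral_le_center (c s : R) :
  (\int[mu]_(w in [set w : R | (w <= s)%R]) (g (w - c))%:E =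
   \int[mu]_(w in [set w : R | (w <= s - c)%R]) (g w)%:E)%E.
Proof.
rewrite -!set_itvNyc.
rewrite [RHS](eq_measure_integral (pushforward mu (center c : R -> measurableTypeR R))); last first.
  by move=> A mA _; apply/esym; apply: lebesgue_measure_center.
rewrite ge0_integral_pushforward //; [|exact: mEg|exact: Eg_ge0].
rewrite (_ : center c @^-1` _ = `]-oo, s]%classic) //.
by apply/seteqP; split => w /=; rewrite !in_itv /= lerD2r.
Qed.

Lemma ge0_integral_le_opp (s : R) :
  (\int[mu]_(w in [set w : R | (w <= - s)%R]) (g w)%:E =
   \int[mu]_(w in [set w : R | (s <= w)%R]) (g (- w))%:E)%E.
Proof.
rewrite -set_itvNyc.
rewrite [LHS](eq_measure_integral (pushforward mu (-%R : R -> measurableTypeR R))); last first.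
  by move=> A mA _; apply/esym; apply: lebesgue_measureN.
rewrite ge0_integral_pushforward //; [|exact: mEg|exact: Eg_ge0].
rewrite (_ : -%R @^-1` _ = [set w : R | (s <= w)%R]) //.
by apply/seteqP; split => w /=; rewrite in_itv /= lerN2.
Qed.

End lebesgue_integral_facts.

Section density_cdf.
Context {R : realType}.
Local Notation mu := (@lebesgue_measure R).

Lemma pos_densityRp_integrable (f : R -> R) : pos_densityRp f ->
  mu.-integrable setT (EFin \o (f \_ [set t : R | 0 <= t])).
Proof.
move=> [mf [f_gt0 f_int1]].
have mD : measurable [set t : R | 0 <= t] by rewrite -set_itvcy; exact: measurable_itv.
rewrite -restrict_EFin; apply/integrable_restrict => //=; rewrite setTI.
apply/integrableP; split; first exact/measurable_EFinP.
rewrite (_ : (\int[mu]_(t in [set t : R | (0 <= t)%R]) `|(EFin \o f) t|)%E = 1%E).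
  exact: ltry.
rewrite -f_int1; apply: eq_integral => t; rewrite inE /= => t0.
by rewrite ger0_norm // ltW // f_gt0.
Qed.

Lemma cdfRp_lt_small (f : R -> R) (e : R) : pos_densityRp f -> 0 < e ->
  exists2 t, 0 < t & cdfRp f t < e.
Proof.
move=> f_dens e0; have [mf [f_gt0 _]] := f_dens.
have [d [d0 small]] := integral_normr_continuous (pos_densityRp_integrable f_dens) e0.
exists (d / 2); first by rewrite divr_gt0.
have itvE : [set s : R | 0 <= s <= d / 2] = `[0, d / 2]%classic.
  by apply/seteqP; split => s /=; rewrite in_itv.
have mu_itv : (mu `[0%R, (d / 2)%R]%classic < d%:E)%E.
  by rewrite lebesgue_measure_itv /= lte_fin divr_gt0 // -EFinD lte_fin; lra.
apply: le_lt_trans (small _ (measurable_itv _) mu_itv); rewrite le_eqVlt; apply/orP; left.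
rewrite /cdfRp /Rintegral itvE; apply/eqP; congr fine.
apply: eq_integral => s; rewrite inE /= in_itv /= => /andP[s0 _].
by rewrite patchE mem_set //= ger0_norm // ltW // f_gt0.
Qed.

Variable g : R -> R.
Hypothesis g_density : densityR g.

Let mg : measurable_fun setT g. Proof. by case: g_density. Qed.
Let g_ge0 v : 0 <= g v. Proof. by case: g_density => _ []. Qed.
Let mEg (A : set R) : measurable_fun A (EFin \o g).
Proof. by apply/measurable_EFinP; exact: measurable_funS mg. Qed.
Let Eg_ge0 (A : set R) : forall v, A v -> (0 <= (g v)%:E)%E.
Proof. by move=> v _; rewrite lee_fin. Qed.
Let measurable_le s : measurable [set w : R | (w <= s)%R].
Proof. by rewrite -set_itvNyc; exact: measurable_itv. Qed.
Let measurable_gt s : measurable [set w : R | (s < w)%R].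
Proof. by rewrite -set_itvoy; exact: measurable_itv. Qed.

Lemma cdfRE s :
  (\int[mu]_(w in [set w : R | (w <= s)%R]) (g w)%:E)%E = (cdfR g s)%:E.
Proof.
rewrite /cdfR fineK // ge0_fin_numE; last by apply: integral_ge0 => v _; rewrite lee_fin.
apply: (@le_lt_trans _ _ 1%E); last exact: ltry.
case: g_density => _ [_ <-].
by apply: ge0_subset_integral => //; [exact: measurable_le | exact: mEg | exact: Eg_ge0].
Qed.

Lemma cdfR_ge0 s : 0 <= cdfR g s.
Proof. by rewrite -lee_fin -cdfRE; apply: integral_ge0 => v _; rewrite lee_fin. Qed.

Lemma cdfR_add_tail s :
  ((cdfR g s)%:E + \int[mu]_(w in [set w : R | (s < w)%R]) (g w)%:E = 1)%E.
Proof.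
rewrite -cdfRE -ge0_integral_setU //;
  [|exact: measurable_le|exact: measurable_gt|exact: mEg|exact: Eg_ge0|]; last first.
  by apply/disj_setPS => w /= [] /le_lt_trans ws /ws; rewrite ltxx.
rewrite (_ : _ `|` _ = setT); first by case: g_density => _ [_ ->].
by apply/seteqP; split => w //= _; case: (leP w s); [left|right].
Qed.

Lemma cdfR_center c s : cdfR (fun v => g (v - c)) s = cdfR g (s - c).
Proof. by rewrite /cdfR ge0_integral_le_center. Qed.

Hypothesis gN : forall v, g (- v) = g v.

Lemma cdfRN s : cdfR g (- s) = 1 - cdfR g s.
Proof.
apply: EFin_inj; rewrite -cdfRE (ge0_integral_le_opp mg g_ge0).
under eq_integral do rewrite gN.
rewrite -set_itvcy -integral_itv_obnd_cbnd; last exact: mEg.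
by rewrite set_itvoy EFinB -(cdfR_add_tail s) addeAC subee ?add0e.
Qed.

Lemma cdfR0 : cdfR g 0 = 1 / 2.
Proof. by have := cdfRN 0; rewrite oppr0; lra. Qed.

Hypothesis g_gt0 : forall v, 0 < g v.

Lemma cdfR_lt : {homo cdfR g : a b / a < b}.
Proof.
move=> a b ab.
have split_le_b : [set w : R | (w <= b)%R] = [set w | w <= a] `|` `]a, b]%classic.
  apply/seteqP; split => w /=; rewrite in_itv /=.
    by move=> wb; case: (leP w a) => wa; [left|right; rewrite wb].
  by case=> [wa|/andP[_ //]]; apply: le_trans wa (ltW ab).
have := cdfRE b; rewrite split_le_b ge0_integral_setU //;
  [|exact: measurable_le|exact: mEg|exact: Eg_ge0|]; last first.
  by apply/disj_setPS => w /= [] wa; rewrite in_itv /= ltNge wa.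
rewrite cdfRE.
have := integral_itv_gt0 mg g_gt0 ab.
case: (\int[mu]_(w in `]a, b]) (g w)%:E)%E => //= I I_gt0 [<-].
by rewrite ltrDl -lte_fin.
Qed.

Lemma ltr_cdfR : {mono cdfR g : a b / a < b}.
Proof. exact/leW_mono/le_mono/cdfR_lt. Qed.

Lemma cdfR_inj : injective (cdfR g).
Proof. exact/inc_inj/le_mono/cdfR_lt. Qed.

Lemma cdfR_lt1 s : cdfR g s < 1.
Proof.
have : cdfR g s < cdfR g (s + 1) by apply: cdfR_lt; lra.
by have := cdfR_ge0 (- (s + 1)); rewrite cdfRN; lra.
Qed.

End density_cdf.

Section choice_function.
Context {R : realType}.
Variable r : R -> R.
Hypothesis r_CF : is_CF r.

Lemma rinvK v : 0 < v -> 0 < r v -> rinv r (r v) = v.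
Proof.
have [_ [_ [r_decr _]]] := r_CF.
move=> v0 rv0; apply: xget_unique => [//|w [w0 [rw0 rwv]]].
case: (ltgtP w v) => // wv.
- by have := r_decr _ _ w0 wv rw0 rv0; rewrite rwv ltxx.
- by have := r_decr _ _ v0 wv rv0 rw0; rewrite rwv ltxx.
Qed.

Lemma rinvP t :
  rinv r t = 0 \/ [/\ 0 < rinv r t, 0 < r (rinv r t) & r (rinv r t) = t].
Proof. by rewrite /rinv; case: xgetP => [v _ [? []]|_]; [right|left]. Qed.

Lemma CF_gt0_lt_root v0 v : 0 < v0 -> r v0 = 0 -> 0 < v -> 0 < r v -> v < v0.
Proof.
have [_ [r_cont [r_decr [r_0 _]]]] := r_CF.
move=> v0_gt0 rv0 v_gt0 rv_gt0; rewrite ltNge; apply/negP => v0v.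
have : nbhs 0^'+ (fun w => r v + 1 <= r w /\ 0 < w /\ w < v0).
  move/cvgryPge : r_0 => /(_ (r v + 1)) r_large.
  by apply: filterS3 r_large (nbhs_right_gt _) (nbhs_right_lt v0_gt0) => w.
move=> /filter_ex [a [ra [a_gt0 av0]]].
have r_cont_av0 : {within `[a, v0], continuous r}.
  apply: continuous_subspaceW r_cont => w /=; rewrite !in_itv /= andbT.
  by move=> /andP[aw _]; exact: lt_le_trans aw.
have rv_between : Num.min (r a) (r v0) <= r v <= Num.max (r a) (r v0).
  by rewrite rv0 ge_min le_max (ltW rv_gt0) orbT /= (le_trans _ ra) // lerDl.
have [c] := IVT (ltW av0) r_cont_av0 rv_between.
rewrite in_itv /= => /andP[ac cv0] rcv.
have c_gt0 : 0 < c by exact: lt_le_trans ac.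
have cv : c < v.
  apply: le_lt_trans cv0 _; rewrite lt_neqAle v0v andbT.
  by apply: contraTneq rv_gt0 => <-; rewrite rv0 ltxx.
by have := r_decr _ _ c_gt0 cv; rewrite rcv ltxx => /(_ rv_gt0 rv_gt0).
Qed.

End choice_function.

Lemma even_gt0_of_nonneg {R : realType} (h : R -> R) :
  (forall d, 0 <= d -> h d = h (- d) /\ 0 < h d) ->
  (forall v, h (- v) = h v) /\ (forall v, 0 < h v).
Proof.
move=> h_nonneg; have hN v : h (- v) = h v.
  have [v0|v0] := leP 0 v; first by rewrite (h_nonneg v v0).1.
  by rewrite (h_nonneg (- v) _).1 ?opprK // oppr_ge0 ltW.
split=> // v; have [v0|v0] := leP 0 v; first by rewrite (h_nonneg v v0).2.
by rewrite -hN (h_nonneg (- v) _).2 // oppr_ge0 ltW.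
Qed.

Definition pbar {R : realType} {X : finType}
    (p : X -> X -> R) (f : X -> X -> R -> R) (x y z : X) : R :=
  if 1 / 2 < p y z then p x z * cdfRp (f x z) (theta p f y z)
  else if p y z == 1 / 2 then p x z
  else 1 - p z x * cdfRp (f z x) (theta p f z y).

Section fechnerian_rationalization.
Context {R : realType} {X : finType}.
Variables (D : rel X) (p : X -> X -> R) (f : X -> X -> R -> R).
Hypothesis D_neq : forall a b, D a b -> a != b.
Hypothesis D_sym : forall a b, D a b -> D b a.
Hypothesis pf_SCF_RT : is_SCF_RT D p f.
Variables (u : X -> R) (g : X -> X -> R -> R) (r : R -> R) (g0 : R -> R).
Hypothesis r_CF : is_CF r.
Hypothesis g0_density : densityR g0.
Hypothesis g0N : forall v, g0 (- v) = g0 v.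
Hypothesis g0_gt0 : forall v, 0 < g0 v.
Hypothesis gE : forall a b, a != b -> forall v, g a b v = g0 (v - (u a - u b)).
Hypothesis rationalized : rationalizes D p f u g r.

Local Notation H := (cdfR g0).

Let p_gt0 a b : D a b -> 0 < p a b.
Proof. by case: pf_SCF_RT => SCF _ /SCF []. Qed.

Let p_add a b : D a b -> p a b + p b a = 1.
Proof. by case: pf_SCF_RT => SCF _ /SCF []. Qed.

Lemma cdfR_gE a b s : a != b -> cdfR (g a b) s = H (s - (u a - u b)).
Proof.
move=> ab; rewrite (_ : g a b = fun v => g0 (v - (u a - u b))); last exact/funext/gE.
by rewrite cdfR_center.
Qed.

Lemma rationalized_cdfR0 a b : D a b -> H (u b - u a) = p b a.
Proof.
move=> Dab; rewrite -(rationalized Dab).1 cdfR_gE ?D_neq //.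
by congr H; rewrite sub0r opprB.
Qed.

Lemma rationalized_cdfRp a b t : D a b -> 0 < t ->
  p a b * cdfRp (f a b) t = 1 - H (rinv r t - (u a - u b)).
Proof.
move=> Dab t0; have [cdf0 cdf_resp] := rationalized Dab.
rewrite -(cdf_resp t t0) cdf0 -cdfR_gE ?D_neq //.
have -> : 1 - p b a = p a b by have := p_add Dab; lra.
by rewrite mulrC divfK // gt_eqF // p_gt0.
Qed.

Lemma CF_gt0 a b v : D a b -> 0 < v -> 0 < r v.
Proof.
move=> Dab v0; rewrite lt_neqAle r_CF.1 // andbT; apply/negP => /eqP rv0.
set c := u a - u b.
have e0 : 0 < (1 - H (v - c)) / p a b by rewrite divr_gt0 ?p_gt0 // subr_gt0 cdfR_lt1.
have [t t0 Ft] := cdfRp_lt_small (pf_SCF_RT.2 _ _ Dab) e0.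
have : H (v - c) < H (rinv r t - c).
  by move: Ft; rewrite ltr_pdivlMr ?p_gt0 // mulrC rationalized_cdfRp //; lra.
rewrite ltr_cdfR // ltrD2r => v_lt_rinv.
case: (rinvP r t) => [rinv0|[rinv_gt0 r_rinv_gt0 _]].
  by move: v_lt_rinv; rewrite rinv0; lra.
by have := CF_gt0_lt_root r_CF v0 (esym rv0) rinv_gt0 r_rinv_gt0; lra.
Qed.

Lemma theta_rinv a b : D a b -> 1 / 2 < p a b ->
  0 < theta p f a b /\ rinv r (theta p f a b) = u a - u b.
Proof.
move=> Dab pab; have pab0 := p_gt0 Dab.
have c0 : 0 < u a - u b.
  have : H (u b - u a) < H 0 by rewrite rationalized_cdfR0 // cdfR0 //; have := p_add Dab; lra.
  by rewrite ltr_cdfR //; lra.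
have [th0 thF] :
    [set t | 0 < t /\ cdfRp (f a b) t = 1 / (2 * p a b)] (theta p f a b).
  apply: xgetPex; exists (r (u a - u b)); split; first exact: CF_gt0 Dab c0.
  rewrite -[LHS](mulKf (lt0r_neq0 pab0)) rationalized_cdfRp ?(CF_gt0 Dab) //.
  by rewrite rinvK ?(CF_gt0 Dab) // subrr cdfR0 //; field; exact: lt0r_neq0.
split=> //; have := rationalized_cdfRp Dab th0; rewrite thF.
have -> : p a b * (1 / (2 * p a b)) = 1 - H 0 by rewrite cdfR0 //; field; exact: lt0r_neq0.
by move=> /(congr1 (fun h => 1 - h)); rewrite !subKr => /(cdfR_inj g0_density g0_gt0); lra.
Qed.

Lemma cdfR_g_pbar x y z : x != y -> D x z -> D y z -> cdfR (g y x) 0 = pbar p f x y z.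
Proof.
move=> xy Dxz Dyz; rewrite cdfR_gE 1?eq_sym // sub0r opprB /pbar.
case: ifP => [pyz_gt|pyz_ngt].
  have [th0 rinv_th] := theta_rinv Dyz pyz_gt.
  by rewrite rationalized_cdfRp // rinv_th -cdfRN //; congr H; lra.
case: ifP => [/eqP pyz_half|pyz_neq].
  have /(cdfR_inj g0_density g0_gt0) uzy : H (u z - u y) = H 0.
    by rewrite rationalized_cdfR0 // cdfR0 //; have := p_add Dyz; lra.
  have -> : u x - u y = - (u z - u x) by lra.
  by rewrite cdfRN // rationalized_cdfR0 //; have := p_add Dxz; lra.
have pzy_gt : 1 / 2 < p z y.
  have : p y z < 1 / 2 by rewrite lt_neqAle pyz_neq leNgt pyz_ngt.
  by have := p_add Dyz; lra.
have [th0 rinv_th] := theta_rinv (D_sym Dyz) pzy_gt.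
by rewrite (rationalized_cdfRp (D_sym Dxz)) // rinv_th subKr; congr H; lra.
Qed.

End fechnerian_rationalization.

Theorem theorem3 (R : realType) (X : finType) (D : rel X)
  (p : X -> X -> R) (f : X -> X -> R -> R)
  (HDC : forall x y, D x y -> x != y)
  (HDsym : forall x y, D x y -> D y x)
  (HDne : exists x y, D x y)
  (Hpf : is_SCF_RT D p f)
  (Hrat : exists (u : X -> R) (g : X -> X -> R -> R) (r : R -> R),
            is_RUM_CF u g r /\ fechnerian u g /\ rationalizes D p f u g r)
  (x y z : X) (Hxy : x != y) (HxyD : ~~ D x y)
  (Hxz : D x z) (Hyz : D y z) :
  exists pbar : R,
    (forall (u : X -> R) (g : X -> X -> R -> R) (r : R -> R),
        is_RUM_CF u g r -> fechnerian u g -> rationalizes D p f u g r ->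
        cdfR (g y x) 0 = pbar) /\
    (p y z <= p x z ->
       (1 / 2 < p y z -> pbar = p x z * cdfRp (f x z) (theta p f y z)) /\
       (p y z = 1 / 2 -> pbar = p x z) /\
       (p y z < 1 / 2 -> pbar = 1 - p z x * cdfRp (f z x) (theta p f z y))).
Proof.
exists (pbar p f x y z); split.
  move=> u g r [_ r_CF] [g0 [g0_density [g0_even gE]]] rationalized.
  have [g0N g0_gt0] := even_gt0_of_nonneg g0_even.
  exact: (cdfR_g_pbar HDC HDsym Hpf r_CF g0_density g0N g0_gt0 gE rationalized Hxy Hxz Hyz).
(* The case formulas hold without the hypothesis p y z <= p x z. *)
move=> _; rewrite /pbar; split; [|split] => pyz.
- by rewrite pyz.
- by rewrite pyz ltxx eqxx.
- by rewrite ltNge (ltW pyz) /= (lt_eqF pyz).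
Qed.
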